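(* Let $\hat Q_i:\mathcal X\times\mathcal A\to[0,1]$ and let $\pi_i^{(t)}$, $\bar Q_i^{(t)}$, $\bar\pi$ be produced by the GAMD inner loop (as in the context) for $T$ iterations. Then for every player $i$ and context $x$, $$\hat V_i^{\dagger,\bar\pi_{-i}}(x)-\hat V_i^{\bar\pi}(x)\le\max_{\pi_i\in\Delta(\mathcal A_i)}\frac1T\sum_{t=1}^Tf_{i,x}^{(t)}(\pi_i)-\frac1T\sum_{t=1}^Tf_{i,x}^{(t)}(\pi_i^{(t)}(\cdot|x))\le\mathcal O\!\left(\frac{\eta(1+\log T)}{T}\right),$$ where $f_{i,x}^{(t)}(\pi_i)=\sum_{a_i}\pi_i(a_i)\bar Q_i^{(t)}(x,a_i)-\eta^{-1}\mathrm{KL}(\pi_i\|\pi_i^{\mathrm{ref}}(\cdot|x))$.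
   Context: $m$-player game with contexts $x$, finite action sets $\mathcal A_i$, $\mathcal A=\prod_i\mathcal A_i$, full-support reference policies $\pi_i^{\mathrm{ref}}$, $\eta>0$. GAMD inner loop: $\pi_i^{(1)}=\pi_i^{\mathrm{ref}}$; $\bar Q_i^{(t)}(x,a_i)=\mathbb E_{\boldsymbol a_{-i}\sim\prod_{j\ne i}\pi_j^{(t)}(\cdot|x)}[\hat Q_i(x,a_i,\boldsymbol a_{-i})]$; $\pi_i^{(t+1)}(a_i|x)\propto(\pi_i^{\mathrm{ref}}(a_i|x))^{1/t}(\pi_i^{(t)}(a_i|x))^{(t-1)/t}\exp(\frac\eta t\bar Q_i^{(t)}(x,a_i))$; $\bar\pi(\boldsymbol a|x)=\frac1T\sum_{t=1}^T\prod_i\pi_i^{(t)}(a_i|x)$, with marginals $\bar\pi_i,\bar\pi_{-i}$. Empirical values: for a joint policy $\pi$, $\hat V_i^\pi(x)=\mathbb E_{\boldsymbol a\sim\pi(\cdot|x)}[\hat Q_i(x,\boldsymbol a)]-\eta^{-1}\mathrm{KL}(\pi_i(\cdot|x)\|\pi_i^{\mathrm{ref}}(\cdot|x))$; $\hat V_i^{\dagger,\nu_{-i}}(x)=\max_{\pi_i'}\hat V_i^{(\pi_i',\nu_{-i})}(x)$, where $(\pi_i',\nu_{-i})$ is the joint policy $\pi_i'(a_i|x)\nu_{-i}(\boldsymbol a_{-i}|x)$. $\mathcal O$ hides an absolute constant. *)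

From HB Require Import structures.
From mathcomp Require Import all_boot all_order all_algebra.
From mathcomp Require Import all_classical all_reals all_analysis.
Unset Printing Implicit Defensive.
Import Order.TTheory GRing.Theory Num.Theory.
Local Open Scope ring_scope.
Local Open Scope classical_set_scope.

Section GAMD.
Variables (R : realType) (m : nat) (A : 'I_m -> finType).

Definition joint := {dffun forall i : 'I_m, A i}.

Definition is_dist {T : finType} (p : T -> R) : Prop :=
  (forall a, 0 <= p a) /\ \sum_a p a = 1.

(* KL(p || q) = sum_a p(a) log(p(a)/q(a))  (0 log 0 = 0 since 0 * _ = 0) *)
Definition KL {T : finType} (p q : T -> R) : R :=
  \sum_a p a * ln (p a / q a).

Definition marg_i (i : 'I_m) (sigma : joint -> R) : A i -> R :=
  fun ai => \sum_(b : joint | b i == ai) sigma b.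

(* marginal of the other players -i of sigma, evaluated at the (-i)-part of b *)
Definition marg_mi (i : 'I_m) (sigma : joint -> R) : joint -> R :=
  fun b => \sum_(c : joint | [forall j, (j != i) ==> (c j == b j)]) sigma c.

Definition prod_pol (i : 'I_m) (p : A i -> R) (nu_mi : joint -> R) : joint -> R :=
  fun b => p (b i) * nu_mi b.

Variables (X : Type) (Qhat : forall i : 'I_m, X -> joint -> R)
          (pref : forall i : 'I_m, X -> A i -> R) (eta : R).

Definition Vhat (i : 'I_m) (x : X) (sigma : joint -> R) : R :=
  \sum_b sigma b * Qhat i x b - eta^-1 * KL (marg_i i sigma) (pref i x).

Definition Vdagger (i : 'I_m) (x : X) (nu_mi : joint -> R) : R :=
  sup [set v | exists p : A i -> R, is_dist p /\ v = Vhat i x (prod_pol i p nu_mi)].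

Definition Qbar_of (pols : forall j : 'I_m, X -> A j -> R)
    (i : 'I_m) (x : X) (ai : A i) : R :=
  \sum_(b : joint | b i == ai)
     (\prod_(j | j != i) pols j x (b j)) * Qhat i x b.

Definition gamd_step (t : nat) (pols : forall j : 'I_m, X -> A j -> R) :
    forall j : 'I_m, X -> A j -> R :=
  fun j x aj =>
    let w := fun a : A j =>
      pref j x a `^ (t%:R^-1) * pols j x a `^ ((t%:R - 1) / t%:R)
        * expR (eta / t%:R * Qbar_of pols j x a) in
    w aj / \sum_a w a.

(* pol n = pi^{(n+1)};  pol 0 = pi^{(1)} = pi^ref *)
Fixpoint pol (n : nat) : forall j : 'I_m, X -> A j -> R :=
  match n with
  | 0 => pref
  | n'.+1 => gamd_step n'.+1 (pol n')
  end.

Definition Qbar (n : nat) (i : 'I_m) (x : X) : A i -> R := Qbar_of (pol n) i x.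

Definition pibar (T : nat) (x : X) : joint -> R :=
  fun b => T%:R^-1 * \sum_(n < T) \prod_i pol n i x (b i).

Definition f_ix (n : nat) (i : 'I_m) (x : X) (p : A i -> R) : R :=
  \sum_a p a * Qbar n i x a - eta^-1 * KL p (pref i x).

Definition regret (T : nat) (i : 'I_m) (x : X) : R :=
  sup [set v | exists p : A i -> R, is_dist p /\
         v = T%:R^-1 * \sum_(n < T) f_ix n i x p]
  - T%:R^-1 * \sum_(n < T) f_ix n i x (pol n i x).

End GAMD.

(* GAMD is follow-the-regularized-leader in disguise: by induction,
   pi^(t+1) is proportional to pi^ref * expR (eta / t * sum_(k <= t) Qbar^(k)),
   a Gibbs distribution.  The Gibbs variational principle then gives
   sum_t f^(t)(p) = T / eta * (ln Z_T - KL(p || pi^(T+1))), so no fixed comparator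
   earns more than T / eta * ln Z_T, while telescoping the same identity along the
   iterates shows the learner falls short of it by sum_t t / eta * KL(pi^(t) || pi^(t+1)).
   Consecutive logits differ by at most eta / t, so each of these KL terms is
   O(eta^2 / t^2) and the regret is O(eta (1 + log T) / T).  For the first
   inequality, a deviation of player i against the averaged opponents has value
   exactly the comparator's average of f, while averaging the iterates of player i
   can only lower its KL penalty, by convexity. *)

From HB Require Import structures.
From mathcomp Require Import all_boot all_order all_algebra.
From mathcomp Require Import all_classical all_reals all_analysis.
From mathcomp Require Import ring lra.
Import Order.TTheory GRing.Theory Num.Theory.
Local Open Scope ring_scope.

Lemma bigA_distr_dffun (R : comNzRingType) (I : finType) (T_ : I -> finType)
    (G : forall i, T_ i -> R) :
  \prod_i \sum_(a : T_ i) G i a = \sum_(f : {dffun forall i, T_ i}) \prod_i G i (f i).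
Proof.
pose F (_ : I) (u : {i : I & T_ i}) := G (tag u) (tagged u).
have sum_tagged i : \sum_(a : T_ i) G i a = \sum_(u | tagged_with T_ i u) F i u.
  rewrite [RHS](eq_bigl (fun u => u \in tagged_with T_ i)) // [RHS]big_sub /=.
  rewrite [RHS](reindex (tag_with i)); last exact/onW_bij/tag_with_bij.
  by apply: eq_big.
under eq_bigr => i _ do rewrite sum_tagged.
rewrite (bigA_distr_big_dep (fun i => tagged_with T_ i) F) [LHS]big_sub /=.
rewrite [LHS](reindex (fun g => to_family_tagged_with (fprod_of_dffun g))); last first.
  exact/onW_bij/(bij_comp (to_family_tagged_with_bij _))/fprod_of_dffun_bij.
by apply: eq_big => // g _; apply: eq_bigr => i _; rewrite /F /= ffunE.
Qed.

Lemma Tagged_eqE (I : eqType) (T_ : I -> eqType) (i : I) (u v : T_ i) :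
  (Tagged T_ u == Tagged T_ v) = (u == v).
Proof. exact: eq_Tagged. Qed.

Section ProductMarginals.
Context {R : comNzRingType} {I : finType} {T_ : I -> finType} (i : I).
Variable p : forall j, T_ j -> R.
Local Notation dffun := {dffun forall j, T_ j}.

(* Both identities come from [bigA_distr_dffun] applied to [p] with some
   factors replaced by Kronecker deltas. *)
Lemma sum_dffun_fix1 (a : T_ i) :
  \sum_(b : dffun | b i == a) \prod_(j | j != i) p j (b j)
  = \prod_(j | j != i) \sum_c p j c.
Proof.
pose G j (c : T_ j) := if j == i then (Tagged T_ c == Tagged T_ a)%:R else p j c.
transitivity (\sum_(b : dffun) \prod_j G j (b j)).
  rewrite big_mkcond /=; apply: eq_bigr => b _.
  rewrite [RHS](bigD1 i) //= /G eqxx Tagged_eqE.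
  rewrite [in RHS](eq_bigr (fun j => p j (b j))); last by move=> j /negbTE ->.
  by case: (b i == a); rewrite ?mul1r ?mul0r.
rewrite -bigA_distr_dffun (bigD1 i) //= /G eqxx.
rewrite (eq_bigr (fun j => \sum_c p j c)); last by move=> j /negbTE ->.
rewrite (bigD1 a) //= Tagged_eqE eqxx big1 ?addr0 ?mul1r // => c.
by rewrite Tagged_eqE => /negbTE ->.
Qed.

Lemma sum_dffun_agree_off (b : dffun) :
  \sum_(c : dffun | [forall j, (j != i) ==> (c j == b j)]) \prod_j p j (c j)
  = (\sum_c p i c) * \prod_(j | j != i) p j (b j).
Proof.
pose G j (c : T_ j) :=
  if j == i then p j c else (Tagged T_ c == Tagged T_ (b j))%:R * p j c.
transitivity (\sum_(c : dffun) \prod_j G j (c j)).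
  rewrite big_mkcond /=; apply: eq_bigr => c _.
  rewrite [RHS](bigD1 i) //= /G eqxx.
  case: ifP => [/forallP cb|/negbT].
    rewrite (bigD1 i) //=; congr (_ * _); apply: eq_bigr => j ji.
    by rewrite (negbTE ji) Tagged_eqE (implyP (cb j) ji) mul1r.
  rewrite negb_forall => /existsP [j]; rewrite negb_imply => /andP [ji cbj].
  by rewrite (bigD1 j) //= (negbTE ji) Tagged_eqE (negbTE cbj) !mul0r mulr0.
rewrite -bigA_distr_dffun (bigD1 i) //= /G eqxx; congr (_ * _).
apply: eq_bigr => j ji; rewrite (negbTE ji) (bigD1 (b j)) //= Tagged_eqE eqxx mul1r.
by rewrite big1 ?addr0 // => c; rewrite Tagged_eqE => /negbTE ->; rewrite mul0r.
Qed.

End ProductMarginals.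

Lemma gt0_powRE (R : realType) (a x : R) : 0 < a -> a `^ x = expR (x * ln a).
Proof. by move=> a_gt0; rewrite /powR gt_eqF. Qed.

Lemma ln_le_subr1 {R : realType} [x : R] : 0 < x -> ln x <= x - 1.
Proof. by move=> x_gt0; have := @le_ln1Dx R (x - 1); rewrite (addrC 1) subrK; apply; lra. Qed.

Lemma harmonic_le_1Dln (R : realType) (T : nat) : (0 < T)%N ->
  \sum_(n < T) (n.+1%:R : R)^-1 <= 1 + ln (T%:R : R).
Proof.
case: T => // T _; elim: T => [|T IH]; first by rewrite big_ord1 invr1 ln1 addr0.
rewrite big_ord_recr /=.
suff step : (T.+2%:R : R)^-1 <= ln (T.+2%:R : R) - ln (T.+1%:R).
  by apply: le_trans (lerD IH step) _; lra.
have T1_gt0 : (0 : R) < T.+1%:R by rewrite ltr0n.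
have T2_gt0 : (0 : R) < T.+2%:R by rewrite ltr0n.
have := ln_le_subr1 (divr_gt0 T1_gt0 T2_gt0); rewrite ln_div ?posrE //.
have -> : (T.+1%:R / T.+2%:R : R) - 1 = - T.+2%:R^-1.
  by rewrite -[T.+2%:R]natr1; field; rewrite -natr1 in T2_gt0; rewrite lt0r_neq0.
set c := (T.+2%:R^-1 : R); lra.
Qed.

(* Multiply [1 - y <= expR (- y)] by [expR y] and compare with the polynomial. *)
Lemma expR_le_1Dx_sqr (R : realType) (y : R) :
  - (1 / 2) <= y <= 1 / 2 -> expR y <= 1 + y + 2 * y ^+ 2.
Proof.
move=> /andP [y_ge y_le].
have expNy_ge : 1 - y <= expR (- y) by exact: (expR_ge1Dx (- y)).
have poly_ge : 1 <= (1 + y + 2 * y ^+ 2) * (1 - y).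
  have : 0 <= y ^+ 2 * (1 - 2 * y) by apply: mulr_ge0; [exact: sqr_ge0|lra].
  rewrite expr2; nra.
rewrite -(ler_pM2r (_ : 0 < 1 - y)); last lra.
apply: le_trans poly_ge; rewrite -[leRHS](expRxMexpNx_1 y).
by apply: ler_wpM2l; [exact: ltW (expR_gt0 y)|exact: expNy_ge].
Qed.

Section KullbackLeibler.
Context {R : realType} {T : finType}.
Implicit Types (p q r : T -> R) (L g : T -> R).
Local Notation KL := (@KL R T).

Lemma KL_eq [p p' q q' : T -> R] : p =1 p' -> q =1 q' -> KL p q = KL p' q'.
Proof. by move=> pp' qq'; apply: eq_bigr => a _; rewrite pp' qq'. Qed.

Lemma KLxx p : KL p p = 0.
Proof.
rewrite /KL big1 // => a _; have [->|pa0] := eqVneq (p a) 0; first by rewrite mul0r.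
by rewrite divff // ln1 mulr0.
Qed.

Lemma KL_chain [p q r : T -> R] : (forall a, 0 <= p a) -> (forall a, 0 < q a) ->
  (forall a, 0 < r a) -> KL p q = KL p r + \sum_a p a * ln (r a / q a).
Proof.
move=> p_ge0 q_gt0 r_gt0; rewrite /KL -big_split; apply: eq_bigr => a _ /=.
have [->|pa0] := eqVneq (p a) 0; first by rewrite !mul0r addr0.
have pa_gt0 : 0 < p a by rewrite lt0r pa0 p_ge0.
rewrite -mulrDr -lnM ?posrE ?divr_gt0 //; congr (_ * ln _).
by field; rewrite !lt0r_neq0.
Qed.

Lemma subr_le_mul_ln_div (x y : R) : 0 <= x -> 0 < y -> x - y <= x * ln (x / y).
Proof.
move=> x_ge0 y_gt0; have [->|x0] := eqVneq x 0; first by rewrite mul0r sub0r oppr_le0 ltW.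
have x_gt0 : 0 < x by rewrite lt0r x0.
have := ln_le_subr1 (divr_gt0 y_gt0 x_gt0).
rewrite -[ln (x / y)]opprK -lnV ?posrE ?divr_gt0 // invf_div mulrN => le_yx.
have := ler_wpM2l (ltW x_gt0) le_yx.
by rewrite mulrBr mulr1 mulrCA divff ?lt0r_neq0 // mulr1; lra.
Qed.

Lemma KL_ge0 p q : is_dist R p -> (forall a, 0 < q a) -> \sum_a q a = 1 ->
  0 <= KL p q.
Proof.
move=> [p_ge0 p1] q_gt0 q1; rewrite -(subrr 1) -{1}p1 -q1 -sumrB.
by apply: ler_sum => a _; exact: subr_le_mul_ln_div.
Qed.

Lemma KL_avg_le (N : nat) (P : 'I_N -> T -> R) q : (0 < N)%N ->
  (forall n a, 0 < P n a) -> (forall n, \sum_a P n a = 1) -> (forall a, 0 < q a) ->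
  KL (fun a => N%:R^-1 * \sum_(n < N) P n a) q <= N%:R^-1 * \sum_(n < N) KL (P n) q.
Proof.
move=> N_gt0 P_gt0 P1 q_gt0.
set pbar := fun a => _; have N_gt0' : (0 : R) < N%:R by rewrite ltr0n.
have pbar_gt0 a : 0 < pbar a.
  rewrite /pbar mulr_gt0 ?invr_gt0 // (bigD1 (Ordinal N_gt0)) //=.
  by apply: ltr_pwDl (P_gt0 _ a) _; apply: sumr_ge0 => n _; exact: ltW.
have pbar1 : \sum_a pbar a = 1.
  rewrite -mulr_sumr exchange_big /=; under eq_bigr => n _ do rewrite P1.
  by rewrite sumr_const card_ord mulVf ?lt0r_neq0.
have decomp : \sum_(n < N) KL (P n) q = \sum_(n < N) KL (P n) pbar + N%:R * KL pbar q.
  rewrite (eq_bigr (fun n => KL (P n) pbar + \sum_a P n a * ln (pbar a / q a))); last first.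
    by move=> n _; apply: KL_chain => // a; exact: ltW.
  rewrite big_split /=; congr (_ + _).
  rewrite exchange_big /= /KL mulr_sumr; apply: eq_bigr => a _.
  by rewrite -big_distrl /= mulrA /pbar mulrA mulfV ?lt0r_neq0 // mul1r.
rewrite decomp mulrDr mulrA mulVf ?lt0r_neq0 // mul1r lerDr.
apply: mulr_ge0; first by rewrite invr_ge0 ltW.
apply: sumr_ge0 => n _.
by apply: KL_ge0 => //; split=> [a|]; [exact: ltW|].
Qed.

Definition gibbs L a := expR (L a) / \sum_b expR (L b).

Lemma dist_card_gt0 [p : T -> R] : is_dist R p -> (0 < #|T|)%N.
Proof.
case=> _; rewrite lt0n; apply: contra_eqN => /eqP/card0_eq T0.
by rewrite big_pred0 // eq_sym oner_eq0.
Qed.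

Hypothesis T_nonempty : (0 < #|T|)%N.

Lemma gibbs_norm_gt0 L : 0 < \sum_b expR (L b).
Proof.
have [a _] := card_gt0P T_nonempty.
by rewrite (bigD1 a) //= ltr_pwDl ?expR_gt0 // sumr_ge0 // => b _; rewrite ltW ?expR_gt0.
Qed.

Lemma gibbs_gt0 L a : 0 < gibbs L a.
Proof. by rewrite divr_gt0 ?expR_gt0 ?gibbs_norm_gt0. Qed.

Lemma gibbs_sum1 L : \sum_a gibbs L a = 1.
Proof. by rewrite -big_distrl /= divff // lt0r_neq0 ?gibbs_norm_gt0. Qed.

Lemma gibbs_dist L : is_dist R (gibbs L).
Proof. by split=> [a|]; [exact: ltW (gibbs_gt0 L a)|exact: gibbs_sum1]. Qed.

Lemma ln_gibbs L a : ln (gibbs L a) = L a - ln (\sum_b expR (L b)).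
Proof. by rewrite ln_div ?posrE ?expR_gt0 ?gibbs_norm_gt0 // expRK. Qed.

Lemma gibbs_scale L w c : 0 < c -> (forall a, w a = expR (L a) * c) ->
  forall a, w a / \sum_b w b = gibbs L a.
Proof.
move=> c_gt0 wE a; rewrite (eq_bigr _ (fun b _ => wE b)) -big_distrl /= wE /gibbs.
have := gibbs_norm_gt0 L; move: (\sum_b _) => Z Z_gt0.
by field; rewrite !lt0r_neq0.
Qed.

(* Donsker--Varadhan: over distributions [p], [\sum_a p a * s a - KL p r] is
   maximal at the tilted distribution, with value [ln (\sum_a r a * expR (s a))]. *)
Lemma gibbs_variational p r s : is_dist R p -> (forall a, 0 < r a) ->
  \sum_a p a * s a - KL p r
  = ln (\sum_a expR (ln (r a) + s a)) - KL p (gibbs (fun a => ln (r a) + s a)).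
Proof.
move=> [p_ge0 p1] r_gt0; set L := fun a => _ + _.
rewrite (KL_chain p_ge0 r_gt0 (gibbs_gt0 L)).
have lnE a : ln (gibbs L a / r a) = s a - ln (\sum_b expR (L b)) .
  by rewrite ln_div ?posrE ?gibbs_gt0 // ln_gibbs /L; ring.
have -> : \sum_a p a * ln (gibbs L a / r a)
    = \sum_a p a * s a - ln (\sum_b expR (L b)).
  rewrite -[X in _ - X]mul1r -p1 big_distrl -sumrB /=.
  by apply: eq_bigr => a _; rewrite lnE mulrBr.
ring.
Qed.

Lemma KL_gibbs L L' :
  KL (gibbs L) (gibbs L')
  = ln (\sum_a gibbs L a * expR (L' a - L a)) - \sum_a gibbs L a * (L' a - L a).
Proof.
set M := \sum_a _ * _.
have ZM : \sum_b expR (L' b) = M * \sum_b expR (L b).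
  rewrite /M big_distrl /=; apply: eq_bigr => a _; rewrite /gibbs expRB.
  by field; rewrite !lt0r_neq0 ?expR_gt0 ?gibbs_norm_gt0.
have M_gt0 : 0 < M.
  by rewrite -(pmulr_lgt0 _ (gibbs_norm_gt0 L)) -ZM gibbs_norm_gt0.
have lnE a : ln (gibbs L a / gibbs L' a) = ln M - (L' a - L a).
  by rewrite ln_div ?posrE ?gibbs_gt0 // !ln_gibbs ZM lnM ?posrE ?gibbs_norm_gt0 //; ring.
rewrite /KL; under eq_bigr => a _ do rewrite lnE mulrBr.
by rewrite sumrB -big_distrl /= gibbs_sum1 mul1r.
Qed.

Lemma ln_mgf_sub_mean_le p g (h : R) : is_dist R p -> 0 < h ->
  (forall a, - h <= g a <= h) ->
  ln (\sum_a p a * expR (g a)) - \sum_a p a * g a <= 4 * h ^+ 2.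
Proof.
move=> [p_ge0 p1] h_gt0 g_bound.
have avg_le (F G : T -> R) : (forall a, F a <= G a) -> \sum_a p a * F a <= \sum_a p a * G a.
  by move=> FG; apply: ler_sum => a _; exact: ler_wpM2l.
have avg_cst c : \sum_a p a * c = c by rewrite -big_distrl /= p1 mul1r.
have mean_ge : - h <= \sum_a p a * g a.
  by rewrite -[- h]avg_cst; apply: avg_le => a; case/andP: (g_bound a).
have mgf_le : \sum_a p a * expR (g a) <= expR h.
  by rewrite -[expR h]avg_cst; apply: avg_le => a; rewrite ler_expR; case/andP: (g_bound a).
have mgf_gt0 : 0 < \sum_a p a * expR (g a).
  apply: lt_le_trans (expR_gt0 (- h)) _; rewrite -[expR (- h)]avg_cst.
  by apply: avg_le => a; rewrite ler_expR; case/andP: (g_bound a).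
have [h_small|h_big] := leP h (1 / 2); last first.
  have : ln (\sum_a p a * expR (g a)) <= h.
    by rewrite -[leRHS]expRK ler_ln ?posrE ?expR_gt0.
  rewrite expr2; nra.
apply: le_trans (_ : \sum_a p a * (expR (g a) - 1 - g a) <= _).
  have := ln_le_subr1 mgf_gt0.
  rewrite (eq_bigr _ (fun a _ => mulrBr (p a) (expR (g a) - 1) (g a))) sumrB.
  by rewrite (eq_bigr _ (fun a _ => mulrBr (p a) (expR (g a)) 1)) sumrB avg_cst; lra.
rewrite -[4 * h ^+ 2]avg_cst; apply: avg_le => a.
have /andP [g_ge g_le] := g_bound a.
have := @expR_le_1Dx_sqr R (g a) (ltac:(apply/andP; split; lra)).
have : 0 <= (h - g a) * (h + g a) by apply: mulr_ge0; lra.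
rewrite !expr2; nra.
Qed.

End KullbackLeibler.

Section GAMDIterates.
Variables (R : realType) (m : nat) (A : 'I_m -> finType) (X : Type)
  (Qhat : forall i : 'I_m, X -> joint m A -> R)
  (pref : forall i : 'I_m, X -> A i -> R) (eta : R).
Hypotheses (pref_gt0 : forall i x a, 0 < pref i x a)
  (pref_dist : forall i x, is_dist R (pref i x)) (eta_gt0 : 0 < eta)
  (Qhat_bound : forall i x b, 0 <= Qhat i x b <= 1).

Local Notation pol := (@pol R m A X Qhat pref eta).
Local Notation Qbar := (@Qbar R m A X Qhat pref eta).
Local Notation f_ix := (@f_ix R m A X Qhat pref eta).
Local Notation KL := (KL R).

Let A_nonempty j x : (0 < #|A j|)%N := dist_card_gt0 (pref_dist j x).

Definition Qsum n j x a := \sum_(k < n) Qbar k j x a.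

(* [pi^(n+1)] is proportional to [pref * expR (eta / n * Qsum n)]; [logit] is its
   exponent (at [n = 0] the junk value [0^-1 = 0] gives [ln pref]). *)
Definition logit n j x a := ln (pref j x a) + eta * n%:R^-1 * Qsum n j x a.

Lemma logitS n j x a :
  logit n.+1 j x a = n.+1%:R^-1 * ln (pref j x a) + n%:R / n.+1%:R * logit n j x a
                     + eta / n.+1%:R * Qbar n j x a.
Proof.
rewrite /logit /Qsum big_ord_recr /=; case: n => [|n].
  by rewrite big_ord0 add0r invr1 !mul0r mul1r addr0.
have n1_gt0 : (0 : R) < n.+1%:R by rewrite ltr0n.
have n2_gt0 : (0 : R) < n.+2%:R by rewrite ltr0n.
by rewrite -[n.+2%:R]natr1 in n2_gt0 *; field; rewrite !lt0r_neq0.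
Qed.

Lemma pol_gibbs n j x : pol n j x =1 gibbs (logit n j x).
Proof.
have A0 := A_nonempty j x.
elim: n => [|n IH] a.
  have logit0 b : expR (logit 0 j x b) = pref j x b.
    by rewrite /logit invr0 mulr0 mul0r addr0 lnK ?posrE.
  rewrite /= /gibbs logit0; under eq_bigr => b _ do rewrite logit0.
  by rewrite (proj2 (pref_dist j x)) divr1.
rewrite [pol _]/= /gamd_step -/(pol n).
set Z := \sum_b expR (logit n j x b).
apply: (@gibbs_scale _ _ A0 _ _ (expR (- (n%:R / n.+1%:R * ln Z)))) => [|b].
  exact: expR_gt0.
rewrite IH !gt0_powRE ?pref_gt0 ?(gibbs_gt0 A0) // -!expRD (ln_gibbs A0) -/Z.
rewrite (logitS n j x b) /Qbar -[n.+1%:R]natr1 addrK; congr expR; ring.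
Qed.

Lemma pol_gt0 n j x a : 0 < pol n j x a.
Proof. by rewrite pol_gibbs (gibbs_gt0 (A_nonempty j x)). Qed.

Lemma pol_dist n j x : is_dist R (pol n j x).
Proof.
split=> [a|]; first exact: ltW (pol_gt0 n j x a).
by under eq_bigr do rewrite pol_gibbs; rewrite (gibbs_sum1 (A_nonempty j x)).
Qed.

Definition log_partition n j x := ln (\sum_a expR (logit n j x a)).

Lemma sum_f_ix N i x [p : A i -> R] : is_dist R p ->
  \sum_(n < N) f_ix n i x p = N%:R / eta * (log_partition N i x - KL p (pol N i x)).
Proof.
move=> p_dist; rewrite (KL_eq (frefl p) (pol_gibbs N i x)).
have := gibbs_variational (A_nonempty i x) p (pref i x)
  (fun a => eta * N%:R^-1 * Qsum N i x a) p_dist (pref_gt0 i x).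
rewrite -/(logit N i x) -/(log_partition N i x) => <-.
rewrite /f_ix big_split /= sumrN sumr_const card_ord exchange_big /=.
rewrite mulrBr -[_ *+ N]mulr_natl mulrA; congr (_ - _).
rewrite mulr_sumr; apply: eq_bigr => a _; rewrite -big_distrr /= -/(Qsum N i x a).
have [->|N_gt0] := posnP N; first by rewrite /Qsum big_ord0 !mul0r mulr0.
by field; rewrite !lt0r_neq0 ?ltr0n.
Qed.

Lemma sum_pol_off1 n i x a :
  \sum_(b : joint m A | b i == a) \prod_(j | j != i) pol n j x (b j) = 1.
Proof.
rewrite (sum_dffun_fix1 i (fun j => pol n j x)) big1 // => j _.
by case: (pol_dist n j x).
Qed.

Lemma Qbar_bound n i x a : 0 <= Qbar n i x a <= 1.
Proof.
have weight_ge0 b : 0 <= \prod_(j | j != i) pol n j x (b j).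
  by apply: prodr_ge0 => j _; exact: ltW (pol_gt0 n j x _).
rewrite /Qbar /Qbar_of; apply/andP; split.
  by apply: sumr_ge0 => b _; rewrite mulr_ge0 //; case/andP: (Qhat_bound i x b).
rewrite -[leRHS](sum_pol_off1 n i x a); apply: ler_sum => b _.
by rewrite ler_piMr //; case/andP: (Qhat_bound i x b).
Qed.

Lemma Qsum_avg_bound n i x a : 0 <= n%:R^-1 * Qsum n i x a <= 1.
Proof.
case: n => [|n]; first by rewrite invr0 mul0r lexx ler01.
rewrite mulr_ge0 ?invr_ge0 ?ler0n ?sumr_ge0 //=; last first.
  by move=> k _; case/andP: (Qbar_bound k i x a).
rewrite mulrC ler_pdivrMr ?ltr0n // mul1r.
apply: le_trans (_ : _ <= \sum_(k < n.+1) (1 : R)) _; last by rewrite sumr_const card_ord.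
by apply: ler_sum => k _; case/andP: (Qbar_bound k i x a).
Qed.

Lemma logitS_sub n i x a :
  logit n.+1 i x a - logit n i x a
  = eta / n.+1%:R * (Qbar n i x a - n%:R^-1 * Qsum n i x a).
Proof.
rewrite logitS /logit; case: n => [|n]; first by rewrite invr0 invr1; ring.
by field; rewrite !lt0r_neq0 ?ltr0n.
Qed.

Lemma logitS_sub_bound n i x a :
  - (eta / n.+1%:R) <= logit n.+1 i x a - logit n i x a <= eta / n.+1%:R.
Proof.
have h_gt0 : 0 < eta / n.+1%:R by rewrite divr_gt0 ?ltr0n.
rewrite logitS_sub.
move: (Qsum_avg_bound n i x a) (Qbar_bound n i x a) => /andP [? ?] /andP [? ?].
set h := eta / _ in h_gt0 *; set d := Qbar n i x a - _.
have : 0 <= h * (1 - d) by apply: mulr_ge0; [exact: ltW|rewrite /d; lra].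
have : 0 <= h * (1 + d) by apply: mulr_ge0; [exact: ltW|rewrite /d; lra].
by move=> ? ?; apply/andP; split; nra.
Qed.

Lemma KL_pol_succ_le n i x :
  KL (pol n i x) (pol n.+1 i x) <= 4 * (eta / n.+1%:R) ^+ 2.
Proof.
rewrite (KL_eq (pol_gibbs n i x) (pol_gibbs n.+1 i x)) (KL_gibbs (A_nonempty i x)).
apply: ln_mgf_sub_mean_le; first exact: (gibbs_dist (A_nonempty i x)).
  by rewrite divr_gt0 ?ltr0n.
exact: logitS_sub_bound.
Qed.

(* Telescoping [sum_f_ix] at [N] and [N.+1] leaves one KL term per step. *)
Lemma sum_f_ix_pol N i x :
  \sum_(n < N) f_ix n i x (pol n i x)
  = N%:R / eta * log_partition N i x
    - \sum_(n < N) n.+1%:R / eta * KL (pol n i x) (pol n.+1 i x).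
Proof.
elim: N => [|N IH]; first by rewrite !big_ord0 !mul0r subr0.
have stepS := sum_f_ix N.+1 i x (pol_dist N i x).
have step := sum_f_ix N i x (pol_dist N i x).
rewrite big_ord_recr /= step KLxx subr0 in stepS.
rewrite !big_ord_recr /= IH; move: stepS; rewrite mulrBr; lra.
Qed.

Lemma sum_KL_pol_le N i x : (0 < N)%N ->
  \sum_(n < N) n.+1%:R / eta * KL (pol n i x) (pol n.+1 i x) <= 4 * eta * (1 + ln (N%:R : R)).
Proof.
move=> N_gt0; apply: le_trans (_ : _ <= \sum_(n < N) 4 * eta * n.+1%:R^-1) _.
  apply: ler_sum => n _; have n1_gt0 : (0 : R) < n.+1%:R by rewrite ltr0n.
  apply: le_trans (ler_wpM2l _ (KL_pol_succ_le n i x)) _.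
    by rewrite divr_ge0 ?ler0n ?ltW.
  rewrite (_ : n.+1%:R / eta * (4 * (eta / n.+1%:R) ^+ 2) = 4 * eta * n.+1%:R^-1) //.
  by field; rewrite !lt0r_neq0.
by rewrite -mulr_sumr ler_wpM2l ?harmonic_le_1Dln // mulr_ge0 // ltW.
Qed.

Local Notation regret := (@regret R m A X Qhat pref eta).

Lemma regret_le T i x : (0 < T)%N ->
  regret T i x <= 4 * (eta * (1 + ln (T%:R : R)) / T%:R).
Proof.
move=> T_gt0; have T_gt0' : (0 : R) < T%:R by rewrite ltr0n.
have sup_le : sup [set v | exists p : A i -> R, is_dist R p /\
                     v = T%:R^-1 * \sum_(n < T) f_ix n i x p]
              <= T%:R^-1 * (T%:R / eta * log_partition T i x).
  apply: ge_sup; first by exists (T%:R^-1 * \sum_(n < T) f_ix n i x (pref i x)), (pref i x).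
  move=> _ [p [p_dist ->]]; rewrite sum_f_ix //.
  apply: ler_wpM2l; first by rewrite invr_ge0 ltW.
  apply: ler_wpM2l; first by rewrite divr_ge0 ?ler0n ?ltW.
  rewrite gerBl; case: (pol_dist T i x) => pol_ge0 pol1.
  by apply: KL_ge0 => // a; exact: pol_gt0.
rewrite /regret sum_f_ix_pol.
apply: le_trans (lerB sup_le (lexx _)) _; rewrite -mulrBr opprB addrC subrK.
rewrite [leRHS]mulrA [leRHS]mulrC [in leRHS]mulrA ler_wpM2l ?invr_ge0 ?ler0n //.
exact: sum_KL_pol_le.
Qed.

Local Notation pibar := (@pibar R m A X Qhat pref eta).
Local Notation Vhat := (@Vhat R m A X Qhat pref eta).
Local Notation Vdagger := (@Vdagger R m A X Qhat pref eta).
Local Notation marg_i := (@marg_i R m A).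
Local Notation marg_mi := (@marg_mi R m A).
Local Notation prod_pol := (@prod_pol R m A).

Section PlayerView.
Variables (T : nat) (i : 'I_m) (x : X).
Hypothesis T_gt0 : (0 < T)%N.

Let T_neq0 : (T%:R : R) != 0. Proof. by rewrite pnatr_eq0 -lt0n. Qed.

Definition mix_against (P : 'I_T -> A i -> R) (b : joint m A) : R :=
  T%:R^-1 * \sum_(n < T) P n (b i) * \prod_(j | j != i) pol n j x (b j).

Lemma sum_mix_Qhat (p : A i -> R) n :
  \sum_(b : joint m A) p (b i) * \prod_(j | j != i) pol n j x (b j) * Qhat i x b
  = \sum_a p a * Qbar n i x a.
Proof.
rewrite (partition_big (fun b : joint m A => b i) predT) //=.
apply: eq_bigr => a _; rewrite /Qbar /Qbar_of big_distrr /=.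
by apply: eq_bigr => b /eqP <-; rewrite mulrA.
Qed.

Lemma marg_mix_against (P : 'I_T -> A i -> R) :
  marg_i i (mix_against P) =1 fun a => T%:R^-1 * \sum_(n < T) P n a.
Proof.
move=> a; rewrite /marg_i /mix_against -mulr_sumr exchange_big /=; congr (_ * _).
apply: eq_bigr => n _.
rewrite (eq_bigr (fun b : joint m A => P n a * \prod_(j | j != i) pol n j x (b j))).
  by rewrite -big_distrr /= sum_pol_off1 mulr1.
by move=> b /eqP ->.
Qed.

Lemma Vhat_mix_against (P : 'I_T -> A i -> R) :
  Vhat i x (mix_against P)
  = T%:R^-1 * \sum_(n < T) \sum_a P n a * Qbar n i x a
    - eta^-1 * KL (fun a => T%:R^-1 * \sum_(n < T) P n a) (pref i x).
Proof.
rewrite /Vhat (KL_eq (marg_mix_against P) (frefl _)); congr (_ - _).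
under [in RHS]eq_bigr do rewrite -sum_mix_Qhat.
rewrite exchange_big /= mulr_sumr; apply: eq_bigr => b _.
by rewrite /mix_against -mulrA mulr_suml.
Qed.

Lemma pibar_mix : pibar T x = mix_against (fun n => pol n i x).
Proof.
apply/funext => b; rewrite /pibar /mix_against; congr (_ * _).
by apply: eq_bigr => n _; rewrite (bigD1 i).
Qed.

Lemma best_response_mix (p : A i -> R) :
  prod_pol i p (marg_mi i (pibar T x)) = mix_against (fun=> p).
Proof.
apply/funext => b; rewrite /prod_pol /marg_mi /mix_against /pibar -mulr_sumr.
rewrite exchange_big /= mulrCA mulr_sumr; congr (_ * _); apply: eq_bigr => n _.
rewrite (sum_dffun_agree_off i (fun j => pol n j x) b).
by case: (pol_dist n i x) => _ ->; rewrite mul1r.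
Qed.

Lemma avg_const (c : R) : T%:R^-1 * \sum_(n < T) c = c.
Proof. by rewrite sumr_const card_ord -(mulr_natl c) mulrA mulVf ?mul1r. Qed.

Lemma Vhat_best_response (p : A i -> R) :
  Vhat i x (prod_pol i p (marg_mi i (pibar T x))) = T%:R^-1 * \sum_(n < T) f_ix n i x p.
Proof.
rewrite best_response_mix Vhat_mix_against (KL_eq (fun a => avg_const (p a)) (frefl _)).
by rewrite /f_ix sumrB mulrBr avg_const.
Qed.

(* Mixing the iterates of player [i] can only lower its KL penalty (convexity). *)
Lemma avg_f_pol_le_Vhat_pibar :
  T%:R^-1 * \sum_(n < T) f_ix n i x (pol n i x) <= Vhat i x (pibar T x).
Proof.
rewrite pibar_mix Vhat_mix_against /f_ix sumrB mulrBr lerB // -mulr_sumr mulrCA.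
apply: ler_wpM2l; first by rewrite invr_ge0 ltW.
apply: KL_avg_le => // [n a|n]; first exact: pol_gt0.
by case: (pol_dist n i x).
Qed.

Lemma Vdagger_sub_Vhat_le_regret :
  Vdagger i x (marg_mi i (pibar T x)) - Vhat i x (pibar T x) <= regret T i x.
Proof.
rewrite /Vdagger /regret; apply: lerB avg_f_pol_le_Vhat_pibar.
rewrite le_eqVlt; apply/predU1l; congr sup.
by apply/seteqP; split=> _ [p [p_dist ->]]; exists p; rewrite Vhat_best_response.
Qed.

End PlayerView.
End GAMDIterates.

Theorem mainTheorem11 :
  exists C : nat,
  forall (R : realType) (m : nat) (A : 'I_m -> finType) (X : Type)
         (Qhat : forall i : 'I_m, X -> joint m A -> R)
         (pref : forall i : 'I_m, X -> A i -> R) (eta : R) (T : nat),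
    (forall i x b, 0 <= Qhat i x b <= 1) ->
    (forall i x, is_dist R (pref i x)) ->
    (forall i x a, 0 < pref i x a) ->
    0 < eta ->
    (0 < T)%N ->
    forall (i : 'I_m) (x : X),
      @Vdagger R m A X Qhat pref eta i x
          (@marg_mi R m A i (@pibar R m A X Qhat pref eta T x))
        - @Vhat R m A X Qhat pref eta i x (@pibar R m A X Qhat pref eta T x)
        <= @regret R m A X Qhat pref eta T i x
      /\ @regret R m A X Qhat pref eta T i x
        <= C%:R * (eta * (1 + ln (T%:R : R)) / T%:R).
Proof.
exists 4%N => R m A X Qhat pref eta T Qhat_bound pref_dist pref_gt0 eta_gt0 T_gt0 i x.
split; first exact: Vdagger_sub_Vhat_le_regret.
exact: regret_le.
Qed.
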